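(* Let $G$ be a signed digraph on $[n]$. If no vertex of $G$ has exactly one unsigned in-neighbor, or if every vertex of $G$ has at least one unsigned in-neighbor, then $G$ admits a nilpotent function $f:\{0,1,2\}^n\to\{0,1,2\}^n$ of class at most $2$.
   Context: A signed digraph is a digraph (loops allowed, no multiple arcs) in which each arc is labeled positive, negative, or null (unsigned). An unsigned in-neighbor of $i$ is a vertex $j$ such that $(j,i)$ is an unsigned (null) arc. For a finite interval of integers $A$, a function over $A$ is a map $f:A^n\to A^n$; $f^0=\mathrm{id}$, $f^k=f\circ f^{k-1}$. The interaction graph $G(f)$ is the signed digraph on $[n]$ with an arc $(j,i)$ iff $f_i(a)\neq f_i(b)$ for some $a,b\in A^n$ with $a_j<b_j$ and $a_\ell=b_\ell$ for $\ell\neq j$; the arc is positive if $f_i(a)\leq f_i(b)$ for all such pairs, negative if $f_i(a)\geq f_i(b)$ for all such pairs, and null otherwise. $G$ admits $f$ if $G(f)=G$. $f$ is nilpotent if $f^k$ is constant for some $k\geq 0$; the least such $k$ is its class. *)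

From mathcomp Require Import all_boot all_order.
Set Implicit Arguments. Unset Strict Implicit. Unset Printing Implicit Defensive.

Inductive sign := Pos | Neg | Null.

(* A signed digraph on [n] = 'I_n : G j i = None if there is no arc (j,i),
   Some s if the arc (j,i) exists with label s (loops allowed). *)
Definition signed_digraph (n : nat) := 'I_n -> 'I_n -> option sign.

Definition config (n : nat) := {ffun 'I_n -> 'I_3}.

Definition jpair n (j : 'I_n) (a b : config n) : bool :=
  (a j < b j) && [forall l, (l != j) ==> (a l == b l)].

Definition interaction n (f : config n -> config n) : signed_digraph n :=
  fun j i =>
    if [forall a, forall b, jpair j a b ==> (f a i == f b i)] then None
    else if [forall a, forall b, jpair j a b ==> (f a i <= f b i)] then Some Pos
    else if [forall a, forall b, jpair j a b ==> (f b i <= f a i)] then Some Neg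
    else Some Null.

Definition admits n (G : signed_digraph n) (f : config n -> config n) : Prop :=
  forall j i, interaction f j i = G j i.

Definition is_null (s : option sign) : bool :=
  if s is Some Null then true else false.

Definition n_unsigned_in n (G : signed_digraph n) (i : 'I_n) : nat :=
  #|[set j | is_null (G j i)]|.

Definition nilpotent_le n (f : config n -> config n) (k : nat) : Prop :=
  exists m, m <= k /\ exists c : config n, forall x, iter m f x = c.

From mathcomp Require Import all_boot all_order.
Set Implicit Arguments. Unset Strict Implicit. Unset Printing Implicit Defensive.

(* Both functions are Boolean rules lifted to two values of {0,1,2}: f_i(x) is
   up exactly when every positive in-neighbour of i is at 2, every negative one
   is below 2, and a condition on the unsigned in-neighbours holds.  Since
   a_j < b_j forces a_j < 2, the test "x_j = 2" is monotone, which gives the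
   signed arcs their sign.
   If no vertex has exactly one unsigned in-neighbour, the condition is that an
   even number of unsigned in-neighbours are at 2 and f takes values in {0,1}:
   raising x_j from 0 to 2 flips the parity, and a second unsigned in-neighbour
   u decides in which direction; f(x) has no coordinate at 2, so f(f(x)) is
   constant.
   If every vertex has an unsigned in-neighbour, the condition is that all of
   them are at 1 and f takes values in {0,2}: x_j = 0, 1, 2 gives down, up,
   down, and f(x) has no coordinate at 1, so f(f(x)) = 0. *)

Section BooleanRules.
Variable n : nat.
Implicit Types (j k : 'I_n) (a b x : config n) (F : config n -> bool).

Lemma forall_jpairP j (P : config n -> config n -> bool) :
  reflect (forall a b, jpair j a b -> P a b)
          [forall a, forall b, jpair j a b ==> P a b].
Proof.
apply: (iffP forallP) => [H a b | H a]; first exact: (implyP (forallP (H a) b)).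
by apply/forallP => b; apply/implyP; apply: H.
Qed.

Lemma forall_jpairF j (P : config n -> config n -> bool) a b :
  jpair j a b -> ~~ P a b -> [forall a, forall b, jpair j a b ==> P a b] = false.
Proof. by move=> ab; apply: contraNF => /forall_jpairP; apply. Qed.

Definition bool_sign j F : option sign :=
  if [forall a, forall b, jpair j a b ==> (F a == F b)] then None
  else if [forall a, forall b, jpair j a b ==> (F a ==> F b)] then Some Pos
  else if [forall a, forall b, jpair j a b ==> (F b ==> F a)] then Some Neg
  else Some Null.

Lemma bool_sign_None j F :
  (forall a b, jpair j a b -> F a = F b) -> bool_sign j F = None.
Proof.
move=> eqF; rewrite /bool_sign (introT (forall_jpairP _ _)) // => a b /eqF ->.
exact: eqxx.
Qed.

Lemma bool_sign_Pos j F a b :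
  (forall a b, jpair j a b -> F a ==> F b) -> jpair j a b -> ~~ F a -> F b ->
  bool_sign j F = Some Pos.
Proof.
move=> monoF ab Fa Fb; rewrite /bool_sign (@forall_jpairF _ _ a b) ?(negbTE Fa) ?Fb //.
by rewrite (introT (forall_jpairP _ _) monoF).
Qed.

Lemma bool_sign_Neg j F a b :
  (forall a b, jpair j a b -> F b ==> F a) -> jpair j a b -> F a -> ~~ F b ->
  bool_sign j F = Some Neg.
Proof.
move=> antiF ab Fa Fb; rewrite /bool_sign (@forall_jpairF _ _ a b) ?Fa ?(negbTE Fb) //.
rewrite (@forall_jpairF _ _ a b) ?Fa ?(negbTE Fb) //.
by rewrite (introT (forall_jpairP _ _) antiF).
Qed.

Lemma bool_sign_Null j F a b c d :
  jpair j a b -> ~~ F a -> F b -> jpair j c d -> F c -> ~~ F d ->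
  bool_sign j F = Some Null.
Proof.
move=> ab Fa Fb cd Fc Fd; rewrite /bool_sign.
rewrite (@forall_jpairF _ _ a b) ?(negbTE Fa) ?Fb //.
rewrite (@forall_jpairF _ _ c d) ?Fc ?(negbTE Fd) //.
by rewrite (@forall_jpairF _ _ a b) ?(negbTE Fa) ?Fb.
Qed.

Definition lift_rule (rule : 'I_n -> config n -> bool) (lo hi : 'I_3) x : config n :=
  [ffun i => if rule i x then hi else lo].

Lemma lift_ruleE (rule : 'I_n -> config n -> bool) lo hi x i :
  lift_rule rule lo hi x i = if rule i x then hi else lo.
Proof. by rewrite ffunE. Qed.

Lemma interaction_lift_rule (rule : 'I_n -> config n -> bool) (lo hi : 'I_3) j i :
  lo < hi -> interaction (lift_rule rule lo hi) j i = bool_sign j (rule i).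
Proof.
move=> lo_hi.
have lift_eq p q : ((if p then hi else lo) == (if q then hi else lo)) = (p == q).
  have hi_lo : (hi == lo) = false by rewrite -val_eqE /= gtn_eqF.
  by case: p q => [] []; rewrite /= ?eqxx // eq_sym hi_lo.
have lift_le p q : ((if p then hi else lo) <= (if q then hi else lo)) = (p ==> q).
  by case: p q => [] []; rewrite /= ?leqnn // ?(ltnW lo_hi) // leqNgt lo_hi.
have lift_forall (P : config n -> config n -> bool) (Q : bool -> bool -> bool) :
    (forall a b, P a b = Q (rule i a) (rule i b)) ->
    [forall a, forall b, jpair j a b ==> P a b] =
    [forall a, forall b, jpair j a b ==> Q (rule i a) (rule i b)].
  by move=> PQ; apply: eq_forallb => a; apply: eq_forallb => b; rewrite PQ.
rewrite /interaction /bool_sign; set f := lift_rule rule lo hi.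
rewrite (lift_forall (fun a b => f a i == f b i) eq_op); last first.
  by move=> a b; rewrite !lift_ruleE lift_eq.
rewrite (lift_forall (fun a b => f a i <= f b i) implb); last first.
  by move=> a b; rewrite !lift_ruleE lift_le.
rewrite (lift_forall (fun a b => f b i <= f a i) (fun p q => q ==> p)) //.
by move=> a b; rewrite !lift_ruleE lift_le.
Qed.

Lemma nilpotent_le2 (f : config n -> config n) :
  (forall x y, f (f x) = f (f y)) -> nilpotent_le f 2.
Proof.
by move=> ff; exists 2; split => //; exists (f (f [ffun=> ord0])) => x; apply: ff.
Qed.

Lemma lift_rule_nilpotent_le2 (rule : 'I_n -> config n -> bool) lo hi :
  (forall i x y, rule i (lift_rule rule lo hi x) = rule i (lift_rule rule lo hi y)) ->
  nilpotent_le (lift_rule rule lo hi) 2.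
Proof.
move=> rule_im; apply: nilpotent_le2 => x y; apply/ffunP => i.
by rewrite !lift_ruleE (rule_im i x y).
Qed.

End BooleanRules.

Definition set_coord n (x : config n) (j : 'I_n) (v : 'I_3) : config n :=
  [ffun k => if k == j then v else x k].

Lemma set_coordE n (x : config n) j v k :
  set_coord x j v k = if k == j then v else x k.
Proof. by rewrite ffunE. Qed.

Lemma set_coord_id n (x : config n) j : set_coord x j (x j) = x.
Proof. by apply/ffunP => k; rewrite set_coordE; case: eqP => [->|]. Qed.

Lemma jpair_set_coord n (x : config n) j (v w : 'I_3) :
  v < w -> jpair j (set_coord x j v) (set_coord x j w).
Proof.
move=> vw; rewrite /jpair !set_coordE eqxx vw /=.
by apply/forallP => k; apply/implyP => kj; rewrite !set_coordE (negbTE kj).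
Qed.

Lemma jpairE n j (a b : config n) : jpair j a b -> b = set_coord a j (b j).
Proof.
case/andP=> _ /forallP ab; apply/ffunP => k; rewrite set_coordE.
by case: eqVneq => [-> // | kj]; move/implyP/(_ kj)/eqP: (ab k).
Qed.

Definition high (v : 'I_3) : bool := v == ord_max.

Lemma high_ord0 : high ord0 = false.
Proof. by []. Qed.

Lemma jpair_low n j (a b : config n) : jpair j a b -> ~~ high (a j).
Proof.
case/andP=> ab _; apply: contraTN ab => /eqP ->.
by rewrite -leqNgt -ltnS ltn_ord.
Qed.

Definition signed_lit (s : option sign) (v : 'I_3) : bool :=
  match s with Some Pos => high v | Some Neg => ~~ high v | _ => true end.

Definition base (s : option sign) : 'I_3 := if s is Some Pos then ord_max else ord0.

Lemma signed_lit_base s : signed_lit s (base s).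
Proof. by case: s => [[]|]. Qed.

Section SignedRule.
Variables (n : nat) (G : signed_digraph n) (i : 'I_n).
Implicit Types (j k : 'I_n) (a b x y : config n).

Definition signed_ok x := [forall k, signed_lit (G k i) (x k)].

Definition fill_signed y : config n :=
  [ffun k => if is_null (G k i) then y k else base (G k i)].

Definition null_local (R : config n -> bool) :=
  forall a b, (forall k, is_null (G k i) -> a k = b k) -> R a = R b.

Definition signed_rule (R : config n -> bool) x := signed_ok x && R x.

Lemma signed_ok_set_coord x j v :
  signed_ok (set_coord x j v) =
  signed_lit (G j i) v && signed_ok (set_coord x j (base (G j i))).
Proof.
apply/forallP/andP => [ok | [ok_v /forallP ok] k].
  split; first by move: (ok j); rewrite set_coordE eqxx.
  apply/forallP => k; move: (ok k); rewrite !set_coordE.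
  by case: eqP => [-> _|//]; apply: signed_lit_base.
by move: (ok k); rewrite !set_coordE; case: eqP => [->|].
Qed.

Lemma signed_ok_set_null x j v :
  is_null (G j i) -> signed_ok (set_coord x j v) = signed_ok x.
Proof.
move=> nj; rewrite -[in RHS](set_coord_id x j).
rewrite [LHS]signed_ok_set_coord [RHS]signed_ok_set_coord.
by case: (G j i) nj => [[]|].
Qed.

Lemma signed_ok_fill y : signed_ok (fill_signed y).
Proof.
apply/forallP => k; rewrite ffunE.
by case: ifP => [|_]; [case: (G k i) => [[]|] | apply: signed_lit_base].
Qed.

Section LocalCondition.
Variable R : config n -> bool.
Hypothesis R_local : null_local R.

Lemma signed_rule_set_coord x j v : ~~ is_null (G j i) ->
  signed_rule R (set_coord x j v) =
  signed_lit (G j i) v && signed_rule R (set_coord x j (base (G j i))).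
Proof.
move=> nnj; rewrite /signed_rule signed_ok_set_coord -andbA.
congr (_ && (_ && _)); apply: R_local => k nk.
by rewrite !set_coordE; case: eqP => [kj|//]; rewrite -kj nk in nnj.
Qed.

Lemma signed_rule_fill y j v : ~~ is_null (G j i) ->
  signed_rule R (set_coord (fill_signed y) j v) = signed_lit (G j i) v && R y.
Proof.
move=> nnj; rewrite signed_rule_set_coord //.
have -> : base (G j i) = fill_signed y j by rewrite ffunE (negbTE nnj).
rewrite set_coord_id /signed_rule signed_ok_fill; congr (_ && _).
by apply: R_local => k nk; rewrite ffunE nk.
Qed.

Lemma signed_rule_fill_null y j v : is_null (G j i) ->
  signed_rule R (set_coord (fill_signed y) j v) = R (set_coord y j v).
Proof.
move=> nj; rewrite /signed_rule signed_ok_set_null // signed_ok_fill.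
by apply: R_local => k nk; rewrite !set_coordE ffunE nk.
Qed.

Lemma bool_sign_signed_rule w j : R w -> ~~ is_null (G j i) ->
  bool_sign j (signed_rule R) = G j i.
Proof.
move=> Rw nnj.
have split_jpair a b : jpair j a b ->
    signed_rule R a =
      signed_lit (G j i) (a j) && signed_rule R (set_coord a j (base (G j i))) /\
    signed_rule R b =
      signed_lit (G j i) (b j) && signed_rule R (set_coord a j (base (G j i))).
  move=> ab; rewrite -{1}(set_coord_id a j) {1}(jpairE ab).
  rewrite [signed_rule R (set_coord a j (a j))]signed_rule_set_coord //.
  by rewrite [signed_rule R (set_coord a j (b j))]signed_rule_set_coord.
have lo_hi := jpair_set_coord (fill_signed w) j (isT : ord0 < @ord_max 2).
have witness v : signed_rule R (set_coord (fill_signed w) j v) = signed_lit (G j i) v.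
  by rewrite signed_rule_fill // Rw andbT.
case Gji: (G j i) nnj witness => [[]|] // _ witness.
- apply: bool_sign_Pos lo_hi _ _; rewrite ?witness //.
  move=> a b ab; have [-> _] := split_jpair a b ab.
  by rewrite Gji /= (negbTE (jpair_low ab)).
- apply: bool_sign_Neg lo_hi _ _; rewrite ?witness //.
  move=> a b ab; have [-> ->] := split_jpair a b ab.
  by rewrite Gji /= (jpair_low ab); apply/implyP => /andP[].
- apply: bool_sign_None => a b ab; have [-> ->] := split_jpair a b ab.
  by rewrite Gji.
Qed.

End LocalCondition.
End SignedRule.

Section ParityRule.
Variables (n : nat) (G : signed_digraph n) (i : 'I_n).

Definition null_even (x : config n) : bool :=
  ~~ odd #|[set k | is_null (G k i) && high (x k)]|.

Lemma null_even_local : null_local G i null_even.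
Proof.
move=> a b ab; congr (~~ odd _); apply: eq_card => k; rewrite !inE.
by case: (boolP (is_null _)) => // /ab ->.
Qed.

Lemma null_even_low (x : config n) : (forall k, ~~ high (x k)) -> null_even x.
Proof.
move=> low; rewrite /null_even (_ : [set k | _] = set0) ?cards0 //.
by apply/setP => k; rewrite !inE (negbTE (low k)) andbF.
Qed.

Lemma null_even_flip (x : config n) j : is_null (G j i) ->
  null_even (set_coord x j ord_max) = ~~ null_even (set_coord x j ord0).
Proof.
move=> nj; rewrite /null_even negbK.
have -> : [set k | is_null (G k i) && high (set_coord x j ord_max k)] =
          j |: [set k | is_null (G k i) && high (set_coord x j ord0 k)].
  apply/setP => k; rewrite !inE !set_coordE.
  by case: eqP => [->|//]; rewrite nj /high eqxx.
by rewrite cardsU1 inE set_coordE eqxx high_ord0 andbF /= negbK.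
Qed.

Lemma bool_sign_null_even j u : is_null (G j i) -> is_null (G u i) -> u != j ->
  bool_sign j (signed_rule G i null_even) = Some Null.
Proof.
move=> nj nu uj; set zero : config n := [ffun=> ord0].
have lo_hi y := @jpair_set_coord n (fill_signed G i y) j ord0 ord_max isT.
have rule_fill y v := signed_rule_fill_null null_even_local y v nj.
have even_zero : null_even (set_coord zero j ord0).
  by apply: null_even_low => k; rewrite set_coordE ffunE if_same high_ord0.
have odd_u : ~~ null_even (set_coord (set_coord zero u ord_max) j ord0).
  rewrite /null_even negbK (_ : [set k | _] = [set u]) ?cards1 //.
  apply/setP => k; rewrite !inE !set_coordE ffunE.
  case: (eqVneq k j) => [->|_]; first by rewrite eq_sym (negbTE uj) high_ord0 andbF.
  by case: eqVneq => [->|_]; rewrite ?nu ?high_ord0 ?andbF.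
apply: (bool_sign_Null (lo_hi (set_coord zero u ord_max)) _ _ (lo_hi zero));
  by rewrite !rule_fill ?null_even_flip ?even_zero ?odd_u.
Qed.

Lemma null_even_rule_eq_high (x y : config n) :
  (forall k, high (x k) = high (y k)) ->
  signed_rule G i null_even x = signed_rule G i null_even y.
Proof.
move=> xy; rewrite /signed_rule /null_even; congr (_ && ~~ odd _).
  by apply: eq_forallb => k; case: (G k i) => [[]|] //=; rewrite xy.
by apply: eq_card => k; rewrite !inE xy.
Qed.

End ParityRule.

Definition mid : 'I_3 := Ordinal (isT : 1 < 3).

Section MidRule.
Variables (n : nat) (G : signed_digraph n) (i : 'I_n).

Definition null_mid (x : config n) : bool :=
  [forall k, is_null (G k i) ==> (x k == mid)].

Lemma null_mid_local : null_local G i null_mid.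
Proof.
move=> a b ab; apply: eq_forallb => k.
by case: (boolP (is_null _)) => // /ab ->.
Qed.

Lemma bool_sign_null_mid j : is_null (G j i) ->
  bool_sign j (signed_rule G i null_mid) = Some Null.
Proof.
move=> nj; set y : config n := [ffun=> mid].
have rule_fill v :
    signed_rule G i null_mid (set_coord (fill_signed G i y) j v) = (v == mid).
  rewrite (signed_rule_fill_null null_mid_local _ _ nj).
  apply/forallP/eqP => [/(_ j)|->{v} k]; first by rewrite nj set_coordE eqxx => /eqP.
  by rewrite set_coordE ffunE if_same eqxx implybT.
have lo_mid := jpair_set_coord (fill_signed G i y) j (isT : ord0 < mid).
have mid_hi := jpair_set_coord (fill_signed G i y) j (isT : mid < @ord_max 2).
by apply: (bool_sign_Null lo_mid _ _ mid_hi); rewrite !rule_fill.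
Qed.

Lemma null_mid_rule_no_mid (x : config n) : 0 < n_unsigned_in G i ->
  (forall k, x k != mid) -> signed_rule G i null_mid x = false.
Proof.
case/card_gt0P => u; rewrite inE => nu not_mid.
apply/negbTE; rewrite negb_and; apply/orP; right; apply/forallPn; exists u.
by rewrite nu /= not_mid.
Qed.

End MidRule.

Definition parity_net n (G : signed_digraph n) : config n -> config n :=
  lift_rule (fun i => signed_rule G i (null_even G i)) ord0 mid.

Definition mid_net n (G : signed_digraph n) : config n -> config n :=
  lift_rule (fun i => signed_rule G i (null_mid G i)) ord0 ord_max.

Lemma admits_parity_net n (G : signed_digraph n) :
  (forall i, n_unsigned_in G i <> 1) -> admits G (parity_net G).
Proof.
move=> not_one j i; rewrite interaction_lift_rule //=.
have [nj | nnj] := boolP (is_null (G j i)); last first.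
  apply: (bool_sign_signed_rule (@null_even_local _ G i) (w := [ffun=> ord0])) nnj.
  by apply: null_even_low => k; rewrite ffunE.
have [u] : exists u, u \in [set k | is_null (G k i)] :\ j.
  apply/card_gt0P; move: (not_one i); rewrite /n_unsigned_in (cardsD1 j) inE nj.
  by case: #|_|.
rewrite !inE => /andP[uj nu].
by rewrite (bool_sign_null_even nj nu uj); case: (G j i) nj => [[]|].
Qed.

Lemma admits_mid_net n (G : signed_digraph n) : admits G (mid_net G).
Proof.
move=> j i; rewrite interaction_lift_rule //=.
have [nj | nnj] := boolP (is_null (G j i)).
  by rewrite bool_sign_null_mid //; case: (G j i) nj => [[]|].
apply: (bool_sign_signed_rule (@null_mid_local _ G i) (w := [ffun=> mid])) nnj.
by apply/forallP => k; rewrite ffunE eqxx implybT.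
Qed.

Lemma parity_net_nilpotent n (G : signed_digraph n) : nilpotent_le (parity_net G) 2.
Proof.
apply: lift_rule_nilpotent_le2 => i x y; apply: null_even_rule_eq_high => k.
by rewrite !lift_ruleE; case: ifP; case: ifP.
Qed.

Lemma mid_net_nilpotent n (G : signed_digraph n) :
  (forall i, 0 < n_unsigned_in G i) -> nilpotent_le (mid_net G) 2.
Proof.
move=> has_null; apply: lift_rule_nilpotent_le2 => i x y.
by rewrite !null_mid_rule_no_mid // => k; rewrite lift_ruleE; case: ifP.
Qed.

Theorem proposition6 (n : nat) (G : signed_digraph n) :
  ((forall i : 'I_n, n_unsigned_in G i <> 1) \/
   (forall i : 'I_n, 0 < n_unsigned_in G i)) ->
  exists f : config n -> config n, admits G f /\ nilpotent_le f 2.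
Proof.
case=> [not_one | has_null].
- exists (parity_net G); split; first exact: admits_parity_net.
  exact: parity_net_nilpotent.
- exists (mid_net G); split; first exact: admits_mid_net.
  exact: mid_net_nilpotent.
Qed.
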